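(* Fix $\theta$ in the interior of $\Theta$ and suppose $\theta'\mapsto\lambda(\theta')$ is differentiable at $\theta$, so that $\nabla_\theta V(\theta;z)$ exists for every $z\in\mathbb{R}^{SA}$. Let $F:\mathbb{R}^{SA}\to\mathbb{R}\cup\{-\infty\}$ be a proper, upper semicontinuous, concave function that is finite and continuously differentiable on an open neighborhood of $\lambda(\theta)$. Then $\theta\mapsto R(\pi_\theta)$ is differentiable at $\theta$ and $$\nabla_\theta R(\pi_\theta)=\lim_{\delta\to0_+}\ \operatorname*{argmax}_{x\in\mathbb{R}^d}\ \inf_{z\in\mathbb{R}^{SA}}\Big\{V(\theta;z)+\delta\,\nabla_\theta V(\theta;z)^\top x-F^*(z)-\tfrac{\delta}{2}\|x\|^2\Big\}.$$
   Context: Finite MDP: finite state space $\mathcal S$ with $S=|\mathcal S|$, finite action space $\mathcal A$ with $A=|\mathcal A|$, transition probabilities $P_a(i,j)$ of moving from state $i$ to state $j$ under action $a$, initial state distribution $\xi$ on $\mathcal S$, discount factor $\gamma\in(0,1)$. A (stationary) policy $\pi$ assigns to each state $s$ a distribution $\pi(\cdot|s)$ on $\mathcal A$. The state-action occupancy measure of $\pi$ is $\lambda^\pi\in\mathbb{R}^{SA}$, $\lambda^\pi_{sa}=\sum_{t=0}^\infty\gamma^t\,\mathbb P(s_t=s,a_t=a\mid \pi, s_0\sim\xi)$, where $a_t\sim\pi(\cdot|s_t)$ and $s_{t+1}\sim P_{a_t}(s_t,\cdot)$. Policies are parametrized as $\pi_\theta$, $\theta\in\Theta\subset\mathbb{R}^d$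 with $\Theta$ convex; write $\lambda(\theta):=\lambda^{\pi_\theta}$. For a concave utility $F$, the objective is $R(\pi_\theta):=F(\lambda(\theta))$. For $z\in\mathbb{R}^{SA}$ (viewed as a reward function), $V(\theta;z):=\langle z,\lambda(\theta)\rangle=\mathbb E^{\pi_\theta}[\sum_t\gamma^t z_{s_ta_t}]$ is the cumulative discounted value of $\pi_\theta$ under reward $z$. The (concave) Fenchel dual is $F^*(z):=\inf_\lambda\{\langle\lambda,z\rangle-F(\lambda)\}$. $\|\cdot\|$ is the Euclidean norm. *)

From HB Require Import structures.
From mathcomp Require Import all_boot all_order all_algebra.
From mathcomp Require Import all_classical all_reals all_analysis.
Set Implicit Arguments. Unset Strict Implicit. Unset Printing Implicit Defensive.
Import Order.TTheory GRing.Theory Num.Theory.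
Import numFieldNormedType.Exports.
Local Open Scope classical_set_scope.
Local Open Scope ring_scope.

Section MDP.
Variable R : realType.

(* States are 'I_nS, actions are 'I_nA; vectors in R^{SA} are nS x nA
   matrices 'M[R]_(nS, nA); parameters theta live in 'rV[R]_d. *)

Definition is_distr (n : nat) (p : 'rV[R]_n) :=
  (forall i, 0 <= p 0 i) /\ \sum_i p 0 i = 1.

(* P a is the transition matrix under action a: P a i j = P_a(i,j) *)
Definition is_stochastic (n : nat) (M : 'M[R]_n) :=
  forall i, is_distr (row i M).

(* a policy: pol s a = pi(a|s) *)
Definition is_policy (nS nA : nat) (pol : 'M[R]_(nS, nA)) :=
  forall s, is_distr (row s pol).

Definition pol_trans (nS nA : nat) (P : 'I_nA -> 'M[R]_nS)
    (pol : 'M[R]_(nS, nA)) : 'M[R]_nS :=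
  \matrix_(i, j) \sum_a pol i a * P a i j.

Definition state_law (nS nA : nat) (P : 'I_nA -> 'M[R]_nS) (xi : 'rV[R]_nS)
    (pol : 'M[R]_(nS, nA)) (t : nat) : 'rV[R]_nS :=
  iter t (fun mu => mu *m pol_trans P pol) xi.

(* state-action occupancy measure:
   lambda_{sa} = sum_t gamma^t P(s_t = s, a_t = a) *)
Definition occupancy (nS nA : nat) (P : 'I_nA -> 'M[R]_nS) (xi : 'rV[R]_nS)
    (gamma : R) (pol : 'M[R]_(nS, nA)) : 'M[R]_(nS, nA) :=
  \matrix_(s, a)
    limn (series (fun t => gamma ^+ t * (state_law P xi pol t 0 s * pol s a))).

Definition inner (nS nA : nat) (z l : 'M[R]_(nS, nA)) : R :=
  \sum_s \sum_a z s a * l s a.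

Definition sqnorm (d : nat) (x : 'rV[R]_d) : R := \sum_i x 0 i ^+ 2.

Definition grad (d : nat) (f : 'rV[R]_d -> R) (x : 'rV[R]_d) : 'rV[R]_d :=
  \row_i ('D_(delta_mx 0 i) f x).

Definition convex_set_rV (d : nat) (T : set 'rV[R]_d) :=
  forall x y (t : R), T x -> T y -> 0 <= t <= 1 -> T (t *: x + (1 - t) *: y).

(* concavity of an extended-real valued function: convex hypograph *)
Definition concave_ext (nS nA : nat) (F : 'M[R]_(nS, nA) -> \bar R) :=
  forall x y (r s t : R), (r%:E <= F x)%E -> (s%:E <= F y)%E -> 0 <= t <= 1 ->
    (((t * r + (1 - t) * s)%R)%:E <= F (t *: x + (1 - t) *: y)%R)%E.

Definition proper_concave (nS nA : nat) (F : 'M[R]_(nS, nA) -> \bar R) :=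
  (forall x, F x != +oo%E) /\ (exists x, F x != -oo%E).

Definition usc (nS nA : nat) (F : 'M[R]_(nS, nA) -> \bar R) :=
  forall x (a : R), (F x < a%:E)%E -> \forall y \near x, (F y < a%:E)%E.

Definition finite_C1_on (nS nA : nat) (F : 'M[R]_(nS, nA) -> \bar R)
    (U : set 'M[R]_(nS, nA)) :=
  (forall y, U y -> F y \is a fin_num) /\
  (forall y, U y -> differentiable (fine \o F) y) /\
  (forall i j, {within U, continuous (fun y => 'D_(delta_mx i j) (fine \o F) y)}).

Definition fenchel_dual (nS nA : nat) (F : 'M[R]_(nS, nA) -> \bar R)
    (z : 'M[R]_(nS, nA)) : \bar R :=
  ereal_inf [set ((inner l z)%:E - F l)%E | l in [set: 'M[R]_(nS, nA)]].

End MDP.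

From HB Require Import structures.
From mathcomp Require Import all_boot all_order all_algebra.
From mathcomp Require Import all_classical all_reals all_analysis.
From mathcomp Require Import ring lra.
Import Order.TTheory GRing.Theory Num.Theory.
Import numFieldNormedType.Exports.
Local Open Scope classical_set_scope.
Local Open Scope ring_scope.

(* Write L = lambda(theta), J = d lambda(theta), G = F restricted to its finite
   values, z0 = grad G(L) and g = grad R(pi_theta) = grad V(theta; z0).  For
   delta > 0 the objective  obj_delta(x) = inf_z { V(theta;z) - F^*(z)
   + delta <grad V(theta;z), x> - delta/2 |x|^2 }  is an infimum of
   delta-strongly concave quadratics of x, hence has a unique maximizer x_delta
   (the infimum is bounded above and its hypograph is closed, so maximizing
   sequences are Cauchy).  Fenchel-Young at l = L + delta J g gives
   obj_delta(g) >= F(L + delta J g) - delta/2 |g|^2; taking z = z0 and using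
   that concave F lies below its tangent plane (so F^*(z0) >= <L,z0> - F(L))
   gives obj_delta(x) <= F(L) + delta <g,x> - delta/2 |x|^2.  Combining both at
   x = x_delta yields |x_delta - g|^2 <= 2 (|g|^2 - (G(L + delta J g) - G(L))/delta),
   and the difference quotient tends to dG(L)(J g) = |g|^2 as delta -> 0+. *)

Section EuclideanRows.
Context {R : realType} {d : nat}.
Implicit Types (b x y : 'rV[R]_d).

(* The Euclidean inner product of row vectors, in the form it takes in the
   statement of the theorem. *)
Definition dot b x : R := (b *m x^T) 0 0.

Lemma dotE b x : dot b x = \sum_j b 0 j * x 0 j.
Proof. by rewrite /dot mxE; apply: eq_bigr => j _; rewrite mxE. Qed.

Lemma dot_sqnorm x : dot x x = sqnorm x.
Proof. by rewrite dotE; apply: eq_bigr => j _; rewrite expr2. Qed.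

Lemma sqnorm_ge0 x : 0 <= sqnorm x.
Proof. by apply: sumr_ge0 => i _; exact: sqr_ge0. Qed.

Lemma sqnorm_le0 x : sqnorm x <= 0 -> x = 0.
Proof.
move=> x_le0; have /eqP : sqnorm x = 0 by apply/eqP; rewrite eq_le x_le0 sqnorm_ge0.
rewrite psumr_eq0 => [/allP x0|j _]; last exact: sqr_ge0.
apply/matrixP => i j; rewrite ord1 mxE.
by have := x0 j (mem_index_enum _); rewrite sqrf_eq0 => /eqP.
Qed.

Lemma sqnormB b x : sqnorm (x - b) = sqnorm x - 2 * dot b x + sqnorm b.
Proof.
rewrite dotE /sqnorm mulr_sumr -sumrB -big_split /=; apply: eq_bigr => j _.
by rewrite !mxE; ring.
Qed.

(* The parallelogram law at the midpoint: the source of strong concavity. *)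
Lemma sqnorm_mid x y :
  sqnorm (2^-1 *: (x + y)) = (sqnorm x + sqnorm y) / 2 - sqnorm (x - y) / 4.
Proof.
rewrite /sqnorm -big_split /= !mulr_suml -sumrB; apply: eq_bigr => j _.
by rewrite !mxE; field.
Qed.

Lemma dot_mid b x y : dot b (2^-1 *: (x + y)) = (dot b x + dot b y) / 2.
Proof.
rewrite !dotE -big_split /= mulr_suml; apply: eq_bigr => j _.
by rewrite !mxE; ring.
Qed.

Lemma normr_lt_sqnorm x e : 0 < e -> sqnorm x < e ^+ 2 -> `|x| < e.
Proof.
move=> e_gt0 x_lt; rewrite /Num.Def.normr /= mx_normrE.
apply/bigmax_lt => // -[i j] _ /=; rewrite ord1.
have xj_lt : x 0 j ^+ 2 < e ^+ 2.
  apply: le_lt_trans x_lt; rewrite /sqnorm (bigD1 j) //= lerDl.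
  by apply: sumr_ge0 => k _; exact: sqr_ge0.
rewrite -(real_normK (num_real _)) in xj_lt.
have := normr_ge0 (x 0 j); nra.
Qed.

Lemma dot_cvg b (u : nat -> 'rV[R]_d) x :
  u @ \oo --> x -> dot b (u n) @[n --> \oo] --> dot b x.
Proof.
move=> ux; under eq_cvg do rewrite dotE; rewrite dotE.
apply: (cvg_big add_continuous) => j _; apply: cvgMl_tmp.
exact: (continuous_cvg _ (@coord_continuous R 1 d 0 j x) ux).
Qed.

Lemma sqnorm_cvg (u : nat -> 'rV[R]_d) x :
  u @ \oo --> x -> sqnorm (u n) @[n --> \oo] --> sqnorm x.
Proof.
move=> ux; have uj j : (fun n => u n 0 j) @ \oo --> x 0 j.
  exact: (continuous_cvg _ (@coord_continuous R 1 d 0 j x) ux).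
by apply: (cvg_big add_continuous) => j _; exact: cvgM.
Qed.

End EuclideanRows.

Lemma lee_EFin_lbounds {R : realType} (e : \bar R) (c : R) :
  (forall r, (r%:E <= e)%E -> r <= c) -> (e <= c%:E)%E.
Proof.
case: e => [r| |] e_lbounds; first by rewrite lee_fin; apply: e_lbounds.
- by exfalso; have := e_lbounds (c + 1) (leey _); lra.
- exact: leNye.
Qed.

Definition concave_quad {R : realType} {d : nat} (delta alpha : R)
    (b x : 'rV[R]_d) : R :=
  alpha + delta * dot b x - delta / 2 * sqnorm x.

Lemma concave_quad_cvg {R : realType} {d : nat} (delta alpha : R) (b : 'rV[R]_d)
    {u : nat -> 'rV[R]_d} {x : 'rV[R]_d} :
  u @ \oo --> x ->
  concave_quad delta alpha b (u n) @[n --> \oo] --> concave_quad delta alpha b x.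
Proof.
move=> ux; apply: cvgB; first apply: cvgD; first exact: cvg_cst.
  by apply: cvgMl_tmp; exact: dot_cvg.
by apply: cvgMl_tmp; exact: sqnorm_cvg.
Qed.

(* The infimum is described through its real lower bounds (hypothesis obE), so
   that members with value +oo may be present in the family. *)
Section InfOfConcaveQuadratics.
Context {R : realType} {d : nat}.
Variables (delta : R) (Z : Type) (S : set Z) (alpha : Z -> R)
  (b : Z -> 'rV[R]_d) (ob : 'rV[R]_d -> \bar R).
Let q z x := concave_quad delta (alpha z) (b z) x.
Hypotheses (delta_gt0 : 0 < delta) (S_nonempty : exists z, S z)
  (obE : forall x r, (r%:E <= ob x)%E <-> (forall z, S z -> r <= q z x))
  (ob_finite_somewhere : exists x r, (r%:E <= ob x)%E).

Let ob_le_quad x z : S z -> (ob x <= (q z x)%:E)%E.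
Proof. by move=> Sz; apply: lee_EFin_lbounds => r /obE; apply. Qed.

Let mid (x y : 'rV[R]_d) := 2^-1 *: (x + y).

(* Strong concavity: the value at the midpoint beats the average by
   delta/8 |x - y|^2; this is inherited by the infimum. *)
Let ob_mid {x y r s} : (r%:E <= ob x)%E -> (s%:E <= ob y)%E ->
  (((r + s) / 2 + delta / 8 * sqnorm (x - y))%:E <= ob (mid x y))%E.
Proof.
move=> /obE rx /obE sy; apply/obE => z Sz.
have -> : q z (mid x y) = (q z x + q z y) / 2 + delta / 8 * sqnorm (x - y).
  by rewrite /q /concave_quad /mid dot_mid sqnorm_mid; field.
by have := rx z Sz; have := sy z Sz; lra.
Qed.

Let M := ereal_sup (range ob).

Let ob_le_sup x : (ob x <= M)%E.
Proof. by apply: ereal_sup_ubound; exists x. Qed.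

(* The supremum is finite: each q_z is bounded above by completing the square. *)
Let sup_fin_num : M \is a fin_num.
Proof.
have [z0 Sz0] := S_nonempty; have [x0 [r0 r0_le]] := ob_finite_somewhere.
have M_le : (M <= (alpha z0 + delta / 2 * sqnorm (b z0))%:E)%E.
  apply/ereal_supP => _ [x _ <-].
  apply: (@le_trans _ _ (q z0 x)%:E); first exact: ob_le_quad.
  rewrite lee_fin /q /concave_quad.
  have := mulr_ge0 (ltW delta_gt0) (sqnorm_ge0 (x - b z0)); rewrite sqnormB; nra.
rewrite fin_numE; apply/andP; split; apply/eqP => M_inf.
  by have := le_trans r0_le (ob_le_sup x0); rewrite M_inf.
by move: M_le; rewrite M_inf.
Qed.

Let m := fine M.
Let Mm : M = m%:E. Proof. by rewrite /m fineK. Qed.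

Let argmax_value x : (forall w, (ob w <= ob x)%E) -> (m%:E <= ob x)%E.
Proof. by move=> x_max; rewrite -Mm; apply/ereal_supP => _ [w _ <-]. Qed.

Let near_sup_close {x y e1 e2} :
  ((m - e1)%:E <= ob x)%E -> ((m - e2)%:E <= ob y)%E ->
  delta * sqnorm (x - y) <= 4 * (e1 + e2).
Proof.
move=> x_near y_near; have := le_trans (ob_mid x_near y_near) (ob_le_sup _).
rewrite Mm lee_fin mulrAC; lra.
Qed.

(* The hypograph of ob is sequentially closed, each q_z being continuous. *)
Let ob_ge_limit (u : nat -> 'rV[R]_d) x r : u @ \oo --> x ->
  (forall e, 0 < e -> \forall n \near \oo, ((r - e)%:E <= ob (u n))%E) ->
  (r%:E <= ob x)%E.
Proof.
move=> ux u_near; apply/obE => z Sz; apply/ler_addgt0Pr => e e_gt0.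
rewrite -lerBlDr /q; apply: (cvgr_to_ge (concave_quad_cvg _ _ _ ux)).
near=> n; apply: (obE (u n) (r - e)).1 z Sz.
by near: n; exact: u_near.
Unshelve. all: by end_near.
Qed.

(* The maximizer is unique, by strong concavity. *)
Lemma argmax_unique x y : (forall w, (ob w <= ob x)%E) ->
  (forall w, (ob w <= ob y)%E) -> x = y.
Proof.
move=> /argmax_value x_max /argmax_value y_max.
have := @near_sup_close x y 0 0.
rewrite !subr0 => /(_ x_max y_max); rewrite addr0 mulr0 pmulr_rle0 //.
by move/sqnorm_le0/eqP; rewrite subr_eq0 => /eqP.
Qed.

(* The maximizer exists: a maximizing sequence is Cauchy, and its limit is a
   maximizer since the hypograph is closed. *)
Lemma argmax_exists : exists x, forall w, (ob w <= ob x)%E.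
Proof.
pose a (n : nat) : R := n.+1%:R^-1.
have a_gt0 n : 0 < a n by rewrite invr_gt0 ltr0Sn.
have a_near e : 0 < e -> \forall n \near \oo, a n < e.
  by move=> e_gt0; exact: (near_infty_natSinv_lt (PosNum e_gt0)).
have near_max n : exists x, ((m - a n)%:E <= ob x)%E.
  have : ((m - a n)%:E < M)%E by rewrite Mm lte_fin; have := a_gt0 n; lra.
  by move/ereal_sup_gt => [_ [x _ <-] /ltW]; exists x.
have [u u_max] := choice near_max.
have u_cvg : cvg (u @ \oo).
  apply/cauchy_cvgP/cauchy_exP => e e_gt0.
  have ee_gt0 : 0 < delta * e ^+ 2 / 8 by rewrite divr_gt0 // mulr_gt0 // exprn_gt0.
  have [N _ aN] := a_near _ ee_gt0.
  exists (u N); exists N => // n /= Nn.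
  rewrite -ball_normE /ball_ /=; apply: normr_lt_sqnorm => //.
  rewrite -(ltr_pM2l delta_gt0).
  have := near_sup_close (u_max N) (u_max n).
  have := aN N (leqnn N); have := aN n Nn.
  set D := delta * sqnorm _; set E := delta * e ^+ 2; lra.
exists (lim (u @ \oo)) => w; apply: le_trans (ob_le_sup w) _; rewrite Mm.
apply: ob_ge_limit u_cvg _ => e e_gt0; near=> n.
apply: le_trans (u_max n); rewrite lee_fin lerD2l lerN2 ltW //.
by near: n; exact: a_near.
Unshelve. all: by end_near.
Qed.

End InfOfConcaveQuadratics.

Arguments argmax_exists {R d delta Z S alpha b ob}.
Arguments argmax_unique {R d delta Z S alpha b ob} _ _ _ _ {x y}.

Lemma near_ray {R : realType} {V : normedModType R} {P : V -> Prop} {x : V} (w : V) :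
  (\forall y \near x, P y) -> \forall h \near (0 : R)^'+, P (h *: w + x).
Proof.
move=> Px; have ray_cvg : (fun h : R => h *: w + x) @ (0 : R) --> x.
  rewrite -[x in _ --> x]add0r -(scale0r w).
  by apply: cvgD; [apply: cvgZr_tmp; exact: cvg_id | exact: cvg_cst].
exact: (cvg_at_right_filter ray_cvg) _ Px.
Qed.

Lemma derive_quotient_at_right {R : realType} {V W : normedModType R}
    {f : V -> W} {x : V} (v : V) :
  differentiable f x ->
  h^-1 *: (f (h *: v + x) - f x) @[h --> (0 : R)^'+] --> 'D_v f x.
Proof.
move=> dfx; have df : h^-1 *: (f (h *: v + x) - f x) @[h --> (0 : R)^'] --> 'D_v f x.
  exact: (@diff_derivable _ _ _ f x v dfx).
move=> A /df [e e_gt0 Ae]; exists e => // h h_near h_gt0.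
by apply: Ae; rewrite ?gt_eqF.
Qed.

Section FrobeniusInner.
Context {R : realType} {nS nA : nat}.
Implicit Types (z l : 'M[R]_(nS, nA)).

Lemma inner_sym z l : inner l z = inner z l.
Proof. by apply: eq_bigr => s _; apply: eq_bigr => a _; rewrite mulrC. Qed.

(* inner z is linear, so that the generic linearity lemmas apply to it. *)
Lemma inner_is_linear z : linear (inner z).
Proof.
move=> k u v; rewrite /inner -[k *: (\sum_s _)]/(k * _) mulr_sumr -big_split.
apply: eq_bigr => s _; rewrite mulr_sumr -big_split; apply: eq_bigr => a _.
by rewrite !mxE mulrDr mulrCA.
Qed.

HB.instance Definition _ z :=
  GRing.isLinear.Build R _ _ _ (inner z) (inner_is_linear z).

Lemma inner_scaleD z k u l : inner z (k *: u + l) = k * inner z u + inner z l.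
Proof. exact: linearP. Qed.

Lemma inner_continuous z : continuous (inner z).
Proof.
rewrite /inner; apply: (continuous_big add_continuous) => s _.
apply: (continuous_big add_continuous) => a _ l.
exact: (cvgMl_tmp (@coord_continuous R nS nA s a l)).
Qed.

Lemma linear_inner_repr (f : {linear 'M[R]_(nS, nA) -> R}) l :
  f l = inner (\matrix_(s, a) f (delta_mx s a)) l.
Proof.
rewrite {1}(matrix_sum_delta l) linear_sum; apply: eq_bigr => s _.
by rewrite linear_sum; apply: eq_bigr => a _; rewrite linearZ mxE mulrC.
Qed.

End FrobeniusInner.

Section ConcaveSupergradient.
Context {R : realType} {nS nA : nat}.
Variables (F : 'M[R]_(nS, nA) -> \bar R) (L : 'M[R]_(nS, nA)).
Hypotheses (F_concave : concave_ext F) (F_ne_pinfty : forall l, F l != +oo%E)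
  (FL_fin : F L \is a fin_num) (dF : differentiable (fine \o F) L).

(* A concave function lies below its tangent plane at a point where it is
   differentiable: the difference quotients along l - L are bounded below
   by F l - F L, and they converge to the directional derivative. *)
Lemma concave_le_tangent l :
  (F l <= (fine (F L) + 'd (fine \o F) L (l - L))%:E)%E.
Proof.
case Fl : (F l) => [r| |]; last exact: leNye; last by have := F_ne_pinfty l; rewrite Fl.
rewrite lee_fin -lerBlDl -deriveE //; set v := l - L.
apply: (cvgr_to_ge (derive_quotient_at_right v dF)); near=> h.
have h_gt0 : 0 < h by near: h; exact: nbhs_right_gt.
have h_lt1 : h < 1 by near: h; exact: nbhs_right_lt.
have chord : (((h * r + (1 - h) * fine (F L))%R)%:E <= F (h *: v + L))%E.
  have -> : h *: v + L = h *: l + (1 - h) *: L.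
    by rewrite /v scalerBl scale1r scalerBr addrA addrAC.
  by apply: F_concave; rewrite ?Fl ?fineK ?lexx ?ltW.
have Fh_fin : F (h *: v + L) \is a fin_num.
  rewrite fin_numE F_ne_pinfty andbT; apply/eqP => Fh_ninf.
  by move: chord; rewrite Fh_ninf.
rewrite -[h^-1 *: _]/(h^-1 * _) ler_pdivlMl //=.
by move: chord; rewrite -(fineK Fh_fin) lee_fin; lra.
Unshelve. all: by end_near.
Qed.

End ConcaveSupergradient.

Section FenchelDual.
Context {R : realType} {nS nA : nat}.
Variable F : 'M[R]_(nS, nA) -> \bar R.

Lemma fenchel_young z l : (fenchel_dual F z <= (inner l z)%:E - F l)%E.
Proof. by apply: ereal_inf_lbound; exists l. Qed.

Lemma fenchel_dual_ne_pinfty {L} z : F L \is a fin_num -> fenchel_dual F z != +oo%E.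
Proof.
move=> FL_fin; apply/negP => /eqP Fz; have := fenchel_young z L.
by rewrite Fz -(fineK FL_fin) -EFinB leye_eq.
Qed.

(* If z0 is a supergradient of F at L, the infimum defining F^*(z0) is
   attained at L: F^*(z0) >= <L, z0> - F L (the converse is Fenchel-Young). *)
Lemma fenchel_dual_supergradient L z0 :
  F L \is a fin_num ->
  (forall l, (F l <= (fine (F L) + inner z0 (l - L))%:E)%E) ->
  ((inner L z0 - fine (F L))%:E <= fenchel_dual F z0)%E.
Proof.
move=> FL_fin F_le; apply/ereal_infP => _ [l _ <-].
have := F_le l; case: (F l) => [r| |] //=; last by rewrite leey.
rewrite lee_fin -EFinB lee_fin linearB /= !(inner_sym _ z0); lra.
Qed.

End FenchelDual.

Definition value {R : realType} {nS nA d : nat}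
    (lam : 'rV[R]_d -> 'M[R]_(nS, nA)) (th : 'rV[R]_d) (z : 'M[R]_(nS, nA)) : R :=
  inner z (lam th).

Definition prox_obj {R : realType} {nS nA d : nat}
    (lam : 'rV[R]_d -> 'M[R]_(nS, nA)) (F : 'M[R]_(nS, nA) -> \bar R)
    (theta : 'rV[R]_d) (delta : R) (x : 'rV[R]_d) : \bar R :=
  ereal_inf [set ((value lam theta z
                   + delta * (grad (value lam ^~ z) theta *m x^T) 0 0
                   - delta / 2 * sqnorm x)%:E - fenchel_dual F z)%E
            | z in [set: 'M[R]_(nS, nA)]].

Section ProximalSubproblem.
Context {R : realType} {nS nA d : nat}.
Variables (lam : 'rV[R]_d -> 'M[R]_(nS, nA)) (F : 'M[R]_(nS, nA) -> \bar R)
  (theta : 'rV[R]_d).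
Hypotheses (dlam : differentiable lam theta) (F_concave : concave_ext F)
  (F_ne_pinfty : forall l, F l != +oo%E)
  (F_fin_near : \forall l \near lam theta, F l \is a fin_num)
  (dF : differentiable (fine \o F) (lam theta)).

Let L := lam theta.
Let J := 'd lam theta.
Let fL := fine (F L).
Let reward th := fine (F (lam th)).
Let z0 := \matrix_(s, a) 'd (fine \o F) L (delta_mx s a) : 'M[R]_(nS, nA).
Let FL_fin : F L \is a fin_num := nbhs_singleton F_fin_near.

Lemma derive_value z v : 'D_v (value lam ^~ z) theta = inner z (J v).
Proof.
have dinner : differentiable (inner z) L.
  exact: linear_differentiable (inner_continuous z).
rewrite deriveE; last exact: differentiable_comp.
rewrite (_ : value lam ^~ z = inner z \o lam) // diff_comp //.
by rewrite diff_lin //; exact: inner_continuous.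
Qed.

Lemma derive_reward v : 'D_v reward theta = inner z0 (J v).
Proof.
rewrite (_ : reward = (fine \o F) \o lam) // deriveE; last exact: differentiable_comp.
by rewrite diff_comp //=; exact: linear_inner_repr.
Qed.

Lemma grad_value_dot z x : dot (grad (value lam ^~ z) theta) x = inner z (J x).
Proof.
rewrite dotE {2}(row_sum_delta x) !linear_sum /=; apply: eq_bigr => i _.
by rewrite !mxE derive_value !linearZ /= mulrC.
Qed.

Lemma grad_reward : grad reward theta = grad (value lam ^~ z0) theta.
Proof. by apply/rowP => i; rewrite !mxE derive_value derive_reward. Qed.

Let g := grad reward theta.

(* F lies below its tangent plane at L, so z0 is a supergradient; hence the
   dual value F^*(z0) is finite. *)
Let F_le_tangent l : (F l <= (fL + inner z0 (l - L))%:E)%E.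
Proof. by rewrite -linear_inner_repr; exact: concave_le_tangent. Qed.

Let dual_z0_ge : ((inner L z0 - fL)%:E <= fenchel_dual F z0)%E.
Proof. exact: fenchel_dual_supergradient FL_fin F_le_tangent. Qed.

Let dual_z0_fin : fenchel_dual F z0 \is a fin_num.
Proof.
rewrite fin_numE (fenchel_dual_ne_pinfty F z0 FL_fin) andbT.
by apply/eqP => dual_ninf; move: dual_z0_ge; rewrite dual_ninf.
Qed.

(* The objective is the infimum, over the z with finite F^*(z), of the
   delta-strongly concave quadratics of x below. *)
Let S z := fenchel_dual F z \is a fin_num.
Let alpha z := inner z L - fine (fenchel_dual F z).
Let b z := grad (value lam ^~ z) theta.

Lemma prox_objE delta x r : (r%:E <= prox_obj lam F theta delta x)%E <->
  (forall z, S z -> r <= concave_quad delta (alpha z) (b z) x).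
Proof.
rewrite /S /alpha /b /concave_quad /dot /value; split.
  move=> r_le z Fz; have := le_trans r_le (ereal_inf_lbound (ex_intro2 _ _ z I erefl)).
  by rewrite -(fineK Fz) -EFinB lee_fin; lra.
move=> r_le; apply/ereal_infP => _ [z _ <-].
have [Fz|Fz] := boolP (fenchel_dual F z \is a fin_num).
  by rewrite -(fineK Fz) -EFinB lee_fin; have := r_le z Fz; lra.
have -> : fenchel_dual F z = -oo%E.
  by move: Fz; rewrite fin_numE (fenchel_dual_ne_pinfty F z FL_fin) andbT negbK => /eqP.
by rewrite /= leey.
Qed.

(* Lower bound by Fenchel-Young at l = L + delta J x. *)
Lemma prox_obj_lower {delta x} : F (delta *: J x + L) \is a fin_num ->
  ((fine (F (delta *: J x + L)) - delta / 2 * sqnorm x)%:E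
    <= prox_obj lam F theta delta x)%E.
Proof.
move=> Fx_fin; apply/prox_objE => z Fz.
have := fenchel_young F z (delta *: J x + L).
rewrite -(fineK Fz) -(fineK Fx_fin) -EFinB lee_fin inner_sym inner_scaleD.
rewrite /alpha /b /concave_quad grad_value_dot; lra.
Qed.

(* Upper bound by the single member z = z0 of the family. *)
Lemma prox_obj_upper delta x : (prox_obj lam F theta delta x
  <= (fL + delta * dot g x - delta / 2 * sqnorm x)%:E)%E.
Proof.
apply: lee_EFin_lbounds => r /prox_objE /(_ z0 dual_z0_fin).
have := dual_z0_ge; rewrite -(fineK dual_z0_fin) lee_fin.
by rewrite /alpha /b /concave_quad /g grad_reward inner_sym; lra.
Qed.

Let prox_obj_finite delta : exists x r, (r%:E <= prox_obj lam F theta delta x)%E.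
Proof.
exists 0, (fine (F (delta *: J 0 + L)) - delta / 2 * sqnorm (0 : 'rV[R]_d)).
by apply: prox_obj_lower; rewrite linear0 scaler0 add0r.
Qed.

Lemma prox_argmax_exists delta : 0 < delta ->
  exists x, forall y, (prox_obj lam F theta delta y <= prox_obj lam F theta delta x)%E.
Proof.
move=> delta_gt0; apply: (argmax_exists delta_gt0 _ (prox_objE delta)).
  by exists z0.
exact: prox_obj_finite.
Qed.

Lemma prox_argmax_unique delta x y : 0 < delta ->
  (forall w, (prox_obj lam F theta delta w <= prox_obj lam F theta delta x)%E) ->
  (forall w, (prox_obj lam F theta delta w <= prox_obj lam F theta delta y)%E) ->
  x = y.
Proof.
move=> delta_gt0; apply: (argmax_unique delta_gt0 _ (prox_objE delta)).
  by exists z0.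
exact: prox_obj_finite.
Qed.

(* Comparing the lower bound at g with the upper bound at the maximizer:
   the maximizer is close to g up to the error of the difference quotient
   of F o lambda in the direction J g. *)
Lemma prox_argmax_sqdist {delta x} : 0 < delta ->
  (forall y, (prox_obj lam F theta delta y <= prox_obj lam F theta delta x)%E) ->
  F (delta *: J g + L) \is a fin_num ->
  sqnorm (x - g) <= 2 * (sqnorm g - (fine (F (delta *: J g + L)) - fL) / delta).
Proof.
move=> delta_gt0 x_max Fg_fin.
have := le_trans (prox_obj_lower Fg_fin) (le_trans (x_max g) (prox_obj_upper delta x)).
rewrite lee_fin => bounds; rewrite -(ler_pM2l delta_gt0) sqnormB.
set Q := fine _ - fL; rewrite (_ : delta * (2 * _) = 2 * delta * sqnorm g - 2 * Q).
  by move: bounds; rewrite /Q; lra.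
by field; rewrite gt_eqF.
Qed.

(* Since that difference quotient tends to dG(L)(J g) = |g|^2, the maximizers
   converge to the policy gradient g. *)
Lemma prox_argmax_cvg (xsel : R -> 'rV[R]_d) :
  (forall delta, 0 < delta ->
    forall y, (prox_obj lam F theta delta y <= prox_obj lam F theta delta (xsel delta))%E) ->
  xsel delta @[delta --> 0^'+] --> g.
Proof.
move=> xsel_max.
have D_Jg : 'D_(J g) (fine \o F) L = sqnorm g.
  by rewrite deriveE // linear_inner_repr -grad_value_dot -grad_reward dot_sqnorm.
have := derive_quotient_at_right (J g) dF; rewrite D_Jg => quot_cvg.
apply/cvgrPdist_lt => e e_gt0.
have e2_gt0 : 0 < e ^+ 2 / 2 by rewrite divr_gt0 // exprn_gt0.
move/cvgrPdist_lt: quot_cvg => /(_ _ e2_gt0) quot_near.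
near=> delta.
have delta_gt0 : 0 < delta by near: delta; exact: nbhs_right_gt.
have Fg_fin : F (delta *: J g + L) \is a fin_num.
  by near: delta; exact: (near_ray (J g) F_fin_near).
have := prox_argmax_sqdist delta_gt0 (xsel_max _ delta_gt0) Fg_fin.
have : `|sqnorm g - delta^-1 * (fine (F (delta *: J g + L)) - fL)| < e ^+ 2 / 2.
  by near: delta; exact: quot_near.
rewrite mulrC => /ltr_normlP [_ quot_lt] dist_le.
by rewrite distrC; apply: normr_lt_sqnorm => //; lra.
Unshelve. all: by end_near.
Qed.

End ProximalSubproblem.

Arguments prox_argmax_exists {R nS nA d lam F theta}.
Arguments prox_argmax_unique {R nS nA d lam F theta}.
Arguments prox_argmax_cvg {R nS nA d lam F theta}.

Theorem theorem1 (R : realType) (nS nA d : nat)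
  (P : 'I_nA -> 'M[R]_nS) (xi : 'rV[R]_nS) (gamma : R)
  (pi : 'rV[R]_d -> 'M[R]_(nS, nA)) (Theta : set 'rV[R]_d)
  (F : 'M[R]_(nS, nA) -> \bar R) (theta : 'rV[R]_d) :
  (forall a, is_stochastic (P a)) ->
  is_distr xi ->
  0 < gamma < 1 ->
  convex_set_rV Theta ->
  (forall th, Theta th -> is_policy (pi th)) ->
  let lam := fun th => occupancy P xi gamma (pi th) in
  let V := fun th z => inner z (lam th) in
  interior Theta theta ->
  differentiable lam theta ->
  proper_concave F -> usc F -> concave_ext F ->
  (exists U : set 'M[R]_(nS, nA),
      open U /\ U (lam theta) /\ finite_C1_on F U) ->
  let Rpi := fun th => fine (F (lam th)) in
  let obj := fun (delta : R) (x : 'rV[R]_d) =>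
    ereal_inf [set ((V theta z + delta * (grad (V ^~ z) theta *m x^T) 0 0
                     - delta / 2 * sqnorm x)%:E - fenchel_dual F z)%E
              | z in [set: 'M[R]_(nS, nA)]] in
  differentiable Rpi theta /\
  exists xsel : R -> 'rV[R]_d,
    (forall delta, 0 < delta -> forall x,
        (forall y, (obj delta y <= obj delta x)%E) <-> x = xsel delta) /\
    xsel delta @[delta --> 0^'+] --> grad Rpi theta.
Proof.
move=> _ _ _ _ _ lam V _ dlam [F_ne_pinfty _] _ F_concave.
move=> [U [U_open [U_lam [U_fin [U_diff _]]]]] Rpi obj.
have F_fin_near : \forall l \near lam theta, F l \is a fin_num.
  exact: (filterS U_fin (U_open _ U_lam)).
have dF := U_diff _ U_lam.
have dRpi : differentiable Rpi theta := differentiable_comp dlam dF.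
split => //.
pose xsel delta := xget 0 [set x | forall y, (obj delta y <= obj delta x)%E].
have xsel_max delta : 0 < delta -> forall y, (obj delta y <= obj delta (xsel delta))%E.
  move=> delta_gt0.
  exact: (xgetPex 0 (prox_argmax_exists dlam F_concave F_ne_pinfty F_fin_near dF _ delta_gt0)).
exists xsel; split.
  move=> delta delta_gt0 x; split => [x_max|->]; last exact: xsel_max.
  exact: (prox_argmax_unique dlam F_concave F_ne_pinfty F_fin_near dF
    _ _ _ delta_gt0 x_max (xsel_max _ delta_gt0)).
exact: (prox_argmax_cvg dlam F_concave F_ne_pinfty F_fin_near dF _ xsel_max).
Qed.
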